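(* Let $m_0,\widetilde m_0,\widetilde m_1,\dots,\widetilde m_6$ be complex-valued functions on $\mathbb R^2$, $2\pi$-periodic in each variable. Suppose that for every $\boldsymbol\omega\in S_0$ the matrix $\widetilde{\mathbf M}[:,\widehat0](\boldsymbol\omega)$ has full rank $6$ and $\sum_{i\in\{0,2,4,6\}}m_0(\boldsymbol\omega)\overline{\widetilde m_0(\boldsymbol\omega+\boldsymbol\pi_i)}=1$. Then the vector $\mathbf b_0'(\boldsymbol\omega)$ lies in the column space of $\widetilde{\mathbf M}[:,\widehat0](\boldsymbol\omega)$ for every $\boldsymbol\omega\in S_0$ if and only if, for every $\boldsymbol\omega\in S_0$, $\operatorname{rank}\widetilde{\mathbf M}[\mathrm{odd},\widehat0](\boldsymbol\omega)=\operatorname{rank}\widetilde{\mathbf M}[\mathrm{even},\widehat0](\boldsymbol\omega)=3$ and $[m_0(\boldsymbol\omega),m_0(\boldsymbol\omega+\boldsymbol\pi_2),m_0(\boldsymbol\omega+\boldsymbol\pi_4),m_0(\boldsymbol\omega+\boldsymbol\pi_6)]\,\widetilde{\mathbf M}[\mathrm{even},\widehat0](\boldsymbol\omega)=\mathbf 0$, $[m_0(\boldsymbol\omega+\boldsymbol\pi_1),m_0(\boldsymbol\omega+\boldsymbol\pi_3),m_0(\boldsymbol\omega+\boldsymbol\pi_5),m_0(\boldsymbol\omega+\boldsymbol\pi_7)]\,\widetilde{\mathbf M}[\mathrm{odd},\widehat0](\boldsymbol\omega)=\mathbf 0$.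
   Context: $S_0=[-\pi,\pi)^2$. Shifts: $\boldsymbol\pi_0=(0,0)$, $\boldsymbol\pi_1=(\pi/2,\pi/2)$, $\boldsymbol\pi_2=(\pi,0)$, $\boldsymbol\pi_3=(-\pi/2,\pi/2)$, $\boldsymbol\pi_4=(0,\pi)$, $\boldsymbol\pi_5=(\pi/2,-\pi/2)$, $\boldsymbol\pi_6=(\pi,\pi)$, $\boldsymbol\pi_7=(-\pi/2,-\pi/2)$. $\widetilde{\mathbf M}(\boldsymbol\omega)\in\mathbb C^{8\times7}$ has rows $i=0,\dots,7$, columns $j=0,\dots,6$, $(i,j)$ entry $\overline{\widetilde m_j(\boldsymbol\omega+\boldsymbol\pi_i)}$, except that entries with $j=0$ and $i$ odd are $0$. $\widetilde{\mathbf M}[:,0](\boldsymbol\omega)$ is its column of index $0$; $\widetilde{\mathbf M}[:,\widehat0](\boldsymbol\omega)\in\mathbb C^{8\times6}$ is obtained by deleting that column; $\widetilde{\mathbf M}[\mathrm{even},\widehat0](\boldsymbol\omega)$ and $\widetilde{\mathbf M}[\mathrm{odd},\widehat0](\boldsymbol\omega)\in\mathbb C^{4\times6}$ consist of the rows of $\widetilde{\mathbf M}[:,\widehat0](\boldsymbol\omega)$ with indices $0,2,4,6$ and $1,3,5,7$ respectively (in this order). $\mathbf b_0=(1,0,\dots,0)^\top\in\mathbb R^8$ and $\mathbf b_0'(\boldsymbol\omega)=\mathbf b_0-m_0(\boldsymbol\omega)\,\widetilde{\mathbf M}[:,0](\boldsymbol\omega)$. *)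

From HB Require Import structures.
From mathcomp Require Import all_boot all_order all_algebra.
From mathcomp Require Import reals trigo.
From mathcomp Require Import complex.
Set Implicit Arguments. Unset Strict Implicit. Unset Printing Implicit Defensive.
Import Order.TTheory GRing.Theory Num.Theory.
Local Open Scope ring_scope.
Local Open Scope complex_scope.

Definition evi (k : 'I_4) : 'I_8 := inord (2 * val k).
Definition odi (k : 'I_4) : 'I_8 := inord (2 * val k + 1).

Section Defs.
Variable R : realType.
Notation C := (complex R).
Notation pt := (R * R)%type.

Definition padd (w s : pt) : pt := (w.1 + s.1, w.2 + s.2).

Definition shift (i : 'I_8) : pt :=
  match val i with
  | 0 => (0, 0)
  | 1 => (pi / 2, pi / 2)
  | 2 => (pi, 0)
  | 3 => (- (pi / 2), pi / 2)
  | 4 => (0, pi)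
  | 5 => (pi / 2, - (pi / 2))
  | 6 => (pi, pi)
  | _ => (- (pi / 2), - (pi / 2))
  end.

Definition periodic2 (f : pt -> C) : Prop :=
  forall x y : R, f (x + 2 * pi, y) = f (x, y) /\ f (x, y + 2 * pi) = f (x, y).

Definition inS0 (w : pt) : Prop :=
  (- pi <= w.1 < pi) /\ (- pi <= w.2 < pi).

Definition Mt (mt : 'I_7 -> pt -> C) (w : pt) : 'M[C]_(8, 7) :=
  \matrix_(i < 8, j < 7)
    (if (val j == 0%N) && odd (val i) then 0 else (mt j (padd w (shift i)))^*).

Definition Mhat0 (mt : 'I_7 -> pt -> C) (w : pt) : 'M[C]_(8, 6) :=
  \matrix_(i < 8, j < 6) Mt mt w i (lift ord0 j).


Definition Meven (mt : 'I_7 -> pt -> C) (w : pt) : 'M[C]_(4, 6) :=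
  \matrix_(k < 4, j < 6) Mhat0 mt w (evi k) j.
Definition Modd (mt : 'I_7 -> pt -> C) (w : pt) : 'M[C]_(4, 6) :=
  \matrix_(k < 4, j < 6) Mhat0 mt w (odi k) j.

Definition b0 : 'cV[C]_8 := \col_(i < 8) (if val i == 0%N then 1 else 0).
Definition b0' (m0 : pt -> C) (mt : 'I_7 -> pt -> C) (w : pt) : 'cV[C]_8 :=
  b0 - m0 w *: col ord0 (Mt mt w).

Definition m0even (m0 : pt -> C) (w : pt) : 'rV[C]_4 :=
  \row_(k < 4) m0 (padd w (shift (evi k))).
Definition m0odd (m0 : pt -> C) (w : pt) : 'rV[C]_4 :=
  \row_(k < 4) m0 (padd w (shift (odi k))).

End Defs.

From HB Require Import structures.
From mathcomp Require Import all_boot all_order all_algebra.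
From mathcomp Require Import reals trigo.
From mathcomp Require Import complex.
From mathcomp Require Import ring lra zify.
Set Implicit Arguments. Unset Strict Implicit. Unset Printing Implicit Defensive.
Import Order.TTheory GRing.Theory Num.Theory.
Local Open Scope ring_scope.
Local Open Scope complex_scope.

(** The shifts pi_0, ..., pi_7 form a group modulo 2pi Z^2, so by periodicity the
    hypotheses at w + pi_s are the hypotheses at w with the rows of the matrices
    permuted. Solvability at every point therefore gives, for every row index s, a
    solution of M[:,^0](w) x = e_s - m0(w + pi_s) c_s, where c_s is the vector of the
    conj(m~_0(w + pi_r)) over the rows r of the parity of s (and 0 elsewhere); the
    normalisation makes m0 constant on each parity class. Restricted to the even and
    odd rows E and O this says that E maps ker O onto a space containing every
    e_j - a c, so rank O <= 3, and symmetrically rank E <= 3; as rank M = 6 both ranks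
    are 3. A left null vector y of E then satisfies y_j = a (y c) for every j, so the
    one-dimensional left kernel of E is spanned by the all-ones vector, which is the
    annihilation condition. Conversely, if E and O have rank 3 the rank 6 forces the
    column space of M to be col E x col O, and col E = ker (m0 even row), which contains
    the even part of b_0' by the normalisation. *)

Ltac case_ord8 i := case: i => [[|[|[|[|[|[|[|[|//]]]]]]]] ?].

Definition shift_coord (i : 'I_8) : int * int :=
  match val i with
  | 0 => (0, 0) | 1 => (1, 1) | 2 => (2, 0) | 3 => (-1, 1)
  | 4 => (0, 2) | 5 => (1, -1) | 6 => (2, 2) | _ => (-1, -1)
  end.

Lemma shift_index_lt (a b : int) : (absz (a %% 4)%Z + 4 * (absz (b %% 4)%Z)./2 < 8)%N.
Proof.
have ha : (absz (a %% 4)%Z < 4)%N by rewrite -ltz_nat gez0_abs ?modz_ge0 // ltz_pmod.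
have hb : (absz (b %% 4)%Z < 4)%N by rewrite -ltz_nat gez0_abs ?modz_ge0 // ltz_pmod.
have : ((absz (b %% 4)%Z)./2 <= 1)%N by move: hb; case: (absz _) => [|[|[|[|]]]].
lia.
Qed.

(* The index of the shift congruent to pi_s + pi_i modulo 2pi Z^2: the shift of
   index a + 4 b' has coordinates congruent to (a, 2 b' + a mod 2) modulo 4. *)
Definition shift_add (s i : 'I_8) : 'I_8 :=
  Ordinal (shift_index_lt ((shift_coord s).1 + (shift_coord i).1)
                          ((shift_coord s).2 + (shift_coord i).2)).

Lemma shift_add_congr s i :
  (4 %| (shift_coord s).1 + (shift_coord i).1 - (shift_coord (shift_add s i)).1)%Z &&
  (4 %| (shift_coord s).2 + (shift_coord i).2 - (shift_coord (shift_add s i)).2)%Z.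
Proof. by case_ord8 s; case_ord8 i; vm_compute. Qed.

Lemma shift_add0 s : shift_add s ord0 = s.
Proof. by apply/val_inj; case_ord8 s. Qed.

Lemma odd_shift_add s i : odd (shift_add s i) = odd s (+) odd i.
Proof. by case_ord8 s; case_ord8 i. Qed.

Lemma shift_addK s : cancel (shift_add s) (shift_add (shift_add s (shift_add s s))).
Proof. by move=> i; apply/val_inj; case_ord8 s; case_ord8 i. Qed.

Lemma shift_add_inj s : injective (shift_add s).
Proof. exact: can_inj (shift_addK s). Qed.

Lemma val_evi k : evi k = (2 * k)%N :> nat.
Proof. by rewrite /evi inordK //; case: k => [[|[|[|[|]]]]]. Qed.

Lemma val_odi k : odi k = (2 * k + 1)%N :> nat.
Proof. by rewrite /odi inordK //; case: k => [[|[|[|[|]]]]]. Qed.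

Definition parity_idx (b : bool) : 'I_4 -> 'I_8 := if b then odi else evi.

Lemma odd_parity_idx b k : odd (parity_idx b k) = b.
Proof. by case: b; rewrite /= ?val_odi ?val_evi; case: k => [[|[|[|[|]]]]]. Qed.

Lemma parity_idx_inj b : injective (parity_idx b).
Proof.
case: b => j k /(congr1 val); rewrite /= ?val_odi ?val_evi => /eqP;
  by rewrite ?eqn_add2r eqn_pmul2l // => /eqP/val_inj.
Qed.

Lemma big_parity (V : nmodType) (g : 'I_8 -> V) b :
  \sum_(i < 8 | odd i == b) g i = \sum_(k < 4) g (parity_idx b k).
Proof.
rewrite (reindex_onto (parity_idx b) (fun i : 'I_8 => inord i./2)) /=.
  apply: eq_bigl => k; rewrite odd_parity_idx eqxx /=; apply/eqP/val_inj.
  by case: b; rewrite /= ?val_odi ?val_evi; case: k => [[|[|[|[|//]]]] ?] /=; rewrite inordK.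
move=> i /eqP odd_i; apply/val_inj.
by case: b odd_i; case_ord8 i => //= _; rewrite ?val_odi ?val_evi inordK.
Qed.

Definition parity_merge (i : 'I_8) : 'I_(4 + 4) :=
  if odd i then rshift 4 (inord i./2) else lshift 4 (inord i./2).

Lemma rowsub_parity_merge (T : Type) n (A : 'M[T]_(8, n)) :
  rowsub parity_merge (col_mx (rowsub evi A) (rowsub odi A)) = A.
Proof.
apply/matrixP => i j; rewrite mxE /parity_merge.
case: ifP => odd_i; rewrite ?col_mxEu ?col_mxEd mxE; congr (A _ j); apply/val_inj;
  by move: odd_i; case_ord8 i => //= _; rewrite ?val_odi ?val_evi inordK.
Qed.

Section BlockLinearAlgebra.
Variable F : fieldType.

Lemma rank_col_mx_le m1 m2 n (A : 'M[F]_(m1, n)) (B : 'M_(m2, n)) :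
  (\rank (col_mx A B) <= \rank A + \rank B)%N.
Proof. by rewrite -addsmxE mxrank_adds_leqif. Qed.

Lemma rank_one_sub_outer_ge p (c : 'cV[F]_p) (v : 'rV_p) :
  (p.-1 <= \rank (1%:M - c *m v)%R)%N.
Proof.
have rcv : (\rank (c *m v) <= 1)%N.
  exact: leq_trans (mxrankM_maxr _ _) (rank_leq_row _).
have := mxrank_add (1%:M - c *m v) (c *m v); rewrite subrK mxrank1; lia.
Qed.

Lemma rank_kernel_bound p n (E O : 'M[F]_(p, n)) (a : F) (c : 'cV_p) :
  (forall j : 'I_p, exists x, E *m x = delta_mx j 0 - a *: c /\ O *m x = 0) ->
  (\rank O + p.-1 <= n)%N.
Proof.
move=> sol; have [x xP] := fin_all_exists sol.
pose X : 'M_(n, p) := \matrix_(i, j) x j i 0.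
have XE i j M : (M *m X) i j = (M *m x j) i 0.
  by rewrite !mxE; apply: eq_bigr => k _; rewrite mxE.
have EX : E *m X = 1%:M - (a *: c) *m const_mx 1.
  by apply/matrixP => i j; rewrite XE (xP j).1 !mxE big_ord1 !mxE mulr1 andbT.
have OX : O *m X = 0 by apply/matrixP => i j; rewrite XE (xP j).2 !mxE.
have := mulmx0_rank_max OX; have := mxrankM_maxr E X.
have := rank_one_sub_outer_ge (a *: c) (const_mx 1); rewrite -EX; lia.
Qed.

Lemma const_left_annihilator p n (E : 'M[F]_(p, n)) (a : F) (c : 'cV_p) :
  (forall j : 'I_p, exists x, E *m x = delta_mx j 0 - a *: c) ->
  (\rank E < p)%N -> (const_mx 1 : 'rV[F]_p) *m E = 0.
Proof.
move=> sol rE; set K := kermx E.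
have KE : K *m E = 0 := mulmx_ker E.
have rK : (0 < \rank K)%N by rewrite mxrank_ker subn_gt0.
clearbody K; set g := a *: (K *m c).
have Kg : K = g *m const_mx 1.
  apply/matrixP => i j; have [x xP] := sol j.
  have : K *m (E *m x) = 0 by rewrite mulmxA KE mul0mx.
  rewrite xP mulmxBr -scalemxAr -colE => /eqP; rewrite subr_eq0 => /eqP/colP/(_ i).
  by rewrite !mxE big_ord1 !mxE mulr1 => ->.
have : g *m ((const_mx 1 : 'rV[F]_p) *m E) = 0 by rewrite mulmxA -Kg.
move/mulmx0_rank_max; have := mxrankM_maxl g (const_mx 1 : 'rV[F]_p).
rewrite -Kg => ? ?; apply/eqP; rewrite -mxrank_eq0; lia.
Qed.

Lemma col_mx_solvable p q n (E : 'M[F]_(p, n)) (O : 'M_(q, n)) (u : 'rV_p) (b : 'cV_p) :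
  \rank (col_mx E O) = (\rank E + \rank O)%N -> \rank E = p.-1 ->
  u != 0 -> u *m E = 0 -> u *m b = 0 ->
  exists x, col_mx E O *m x = col_mx b 0.
Proof.
move=> rEO rE u_neq0 uE ub.
have [D bD] : exists D, b^T = D *m E^T.
  have EK : (E^T <= kermx u^T)%MS by rewrite sub_kermx -trmx_mul uE trmx0.
  have KE : (kermx u^T <= E^T)%MS.
    by rewrite -(mxrank_leqif_sup EK).2 mxrank_ker !mxrank_tr rank_rV u_neq0 rE subn1.
  have /submxP[D ->] : (b^T <= E^T)%MS.
    by apply: submx_trans KE; rewrite sub_kermx -trmx_mul ub trmx0.
  by exists D.
(* By the rank hypothesis the column space of [E; O] is col E x col O, the row
   space of B^T. *)
set B := block_mx E^T 0 0 O^T.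
have NB : ((col_mx E O)^T <= B)%MS.
  have -> : (col_mx E O)^T = row_mx 1%:M 1%:M *m B.
    by rewrite tr_col_mx mul_row_block !mul1mx addr0 add0r.
  exact: submxMl.
have BN : (B <= (col_mx E O)^T)%MS.
  by rewrite -(mxrank_leqif_sup NB).2 rank_diag_block_mx !mxrank_tr rEO.
have /submxP[Y bY] : ((col_mx b 0)^T <= (col_mx E O)^T)%MS.
  apply: submx_trans BN; apply/submxP; exists (row_mx D 0).
  by rewrite tr_col_mx trmx0 mul_row_block !mul0mx !mulmx0 !addr0 bD.
by exists Y^T; rewrite -[col_mx b 0]trmxK bY trmx_mul trmxK.
Qed.

Lemma rank_le_parity_blocks n (A : 'M[F]_(8, n)) :
  (\rank A <= \rank (col_mx (rowsub evi A) (rowsub odi A)))%N.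
Proof. by rewrite -{1}(rowsub_parity_merge A) mxrankS ?rowsub_sub. Qed.

End BlockLinearAlgebra.

Section Periodicity.
Variable R : realType.

Lemma periodic_int (V : Type) (T : R) (g : R -> V) :
  (forall t, g (t + T) = g t) -> forall t (k : int), g (t + k%:~R * T) = g t.
Proof.
move=> gT t k.
have gnat (j : nat) s : g (s + j%:R * T) = g s.
  by elim: j s => [|j IH] s; rewrite ?mul0r ?addr0 // mulrSr mulrDl mul1r addrA gT IH.
case: k => j; first by rewrite -pmulrn gnat.
by rewrite NegzE -[in RHS](subrK (j.+1%:R * T) t) gnat intrN mulNr.
Qed.

Lemma periodic2_int (f : R * R -> R[i]) : periodic2 f ->
  forall x y (n m : int), f (x + n%:~R * (2 * pi), y + m%:~R * (2 * pi)) = f (x, y).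
Proof.
move=> fP x y n m.
rewrite (@periodic_int _ _ (fun s => f (s, _)) (fun s => (fP s _).1)).
exact: (@periodic_int _ _ (fun s => f (x, s)) (fun s => (fP x s).2)).
Qed.

Lemma exists_translate_into_period (x : R) :
  exists k : int, - pi <= x + k%:~R * (2 * pi) < pi.
Proof.
have pi_gt0 : 0 < pi :> R := pi_gt0 R.
set q := (x + pi) / (2 * pi).
have qE : q * (2 * pi) = x + pi by rewrite mulfVK // mulf_neq0 ?gt_eqF.
have /andP[le_fq lt_qf] := Num.Theory.floor_itv q.
exists (- Num.floor q); rewrite intrN mulNr; move: le_fq lt_qf; rewrite intrD.
set t := (Num.floor q)%:~R => le_tq lt_qt.
apply/andP; split; nra.
Qed.

Lemma exists_S0_congruent (w : R * R) :
  exists w', inS0 w' /\ forall f, periodic2 f -> forall v, f (padd w' v) = f (padd w v).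
Proof.
have [k1 /andP[k1l k1r]] := exists_translate_into_period w.1.
have [k2 /andP[k2l k2r]] := exists_translate_into_period w.2.
exists (w.1 + k1%:~R * (2 * pi), w.2 + k2%:~R * (2 * pi)); split; first by split; apply/andP.
by move=> f fP v; rewrite /padd /= !(addrAC _ _ v.1, addrAC _ _ v.2) periodic2_int.
Qed.

Lemma shiftE i : shift R i =
  ((shift_coord i).1%:~R * (pi / 2), (shift_coord i).2%:~R * (pi / 2)).
Proof. by case_ord8 i; rewrite /shift /=; congr pair; lra. Qed.

Lemma half_pi_congr (a b c : int) (t : R) : (4 %| a + b - c)%Z ->
  exists k : int,
    t + a%:~R * (pi / 2) + b%:~R * (pi / 2) = t + c%:~R * (pi / 2) + k%:~R * (2 * pi).
Proof.
case/dvdzP => k abc; exists k.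
have -> : a = c - b + k * 4 by lia.
by rewrite !intrD intrN intrM; field.
Qed.

Lemma periodic2_shift_add (f : R * R -> R[i]) : periodic2 f -> forall w s i,
  f (padd (padd w (shift R s)) (shift R i)) = f (padd w (shift R (shift_add s i))).
Proof.
move=> fP w s i; have /andP[] := shift_add_congr s i.
move=> /(half_pi_congr w.1)[n hn] /(half_pi_congr w.2)[m hm].
by rewrite !shiftE /padd /= hn hm periodic2_int.
Qed.

Lemma padd_shift0 (w : R * R) : padd w (shift R ord0) = w.
Proof. by case: w => x y; rewrite /padd /shift /= !addr0. Qed.

End Periodicity.

Section Proposition2.
Variable R : realType.
Variables (m0 : R * R -> R[i]) (mt : 'I_7 -> R * R -> R[i]).
Hypotheses (m0P : periodic2 m0) (mtP : forall j, periodic2 (mt j)).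
Hypothesis sum_m0_mt0 : forall w, inS0 w ->
  \sum_(k < 4) m0 w * (mt ord0 (padd w (shift R (evi k))))^* = 1.

Local Notation mt0c w i := ((mt ord0 (padd w (shift R i)))^*).

Lemma sum_m0_mt0_everywhere w : m0 w * \sum_(k < 4) mt0c w (evi k) = 1.
Proof.
have [w' [w'S0 w'w]] := exists_S0_congruent w.
rewrite -{1}(padd_shift0 w) -(w'w _ m0P) padd_shift0 mulr_sumr -(sum_m0_mt0 w'S0).
by apply: eq_bigr => k _; rewrite (w'w _ (mtP _)).
Qed.

Lemma m0_class_sum w s :
  m0 (padd w (shift R s)) * \sum_(k < 4) mt0c w (parity_idx (odd s) k) = 1.
Proof.
rewrite -(sum_m0_mt0_everywhere (padd w (shift R s))); congr (_ * _).
under [RHS]eq_bigr => k _ do rewrite periodic2_shift_add //.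
rewrite -(big_parity (fun r => mt0c w r)).
rewrite -(big_parity (fun i => mt0c w (shift_add s i)) false).
rewrite [LHS](reindex_inj (@shift_add_inj s)); apply: eq_bigl => i.
by rewrite odd_shift_add; case: (odd s); case: (odd i).
Qed.

Lemma m0_neq0 w : m0 w != 0.
Proof.
apply/eqP => m0w; have := sum_m0_mt0_everywhere w.
by rewrite m0w mul0r => /eqP; rewrite eq_sym oner_eq0.
Qed.

Lemma m0_parity_const w (r s : 'I_8) : odd r = odd s ->
  m0 (padd w (shift R r)) = m0 (padd w (shift R s)).
Proof.
move=> rs; have := m0_class_sum w r; rewrite rs -(m0_class_sum w s).
apply: mulIf; apply/eqP => sum0; have := m0_class_sum w s.
by rewrite sum0 mulr0 => /eqP; rewrite eq_sym oner_eq0.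
Qed.

Lemma m0evenE w : m0even m0 w = m0 w *: const_mx 1.
Proof.
apply/rowP => k; rewrite !mxE mulr1 -[in RHS](padd_shift0 w).
by apply: m0_parity_const; rewrite val_evi oddM.
Qed.

Lemma m0oddE w : m0odd m0 w = m0 (padd w (shift R (odi ord0))) *: const_mx 1.
Proof.
by apply/rowP => k; rewrite !mxE mulr1; apply: m0_parity_const; rewrite !val_odi oddD oddM.
Qed.

Lemma MevenE w : Meven mt w = rowsub evi (Mhat0 mt w).
Proof. by apply/matrixP => k j; rewrite !mxE. Qed.

Lemma ModdE w : Modd mt w = rowsub odi (Mhat0 mt w).
Proof. by apply/matrixP => k j; rewrite !mxE. Qed.

Lemma Mhat0E w i j : Mhat0 mt w i j = (mt (lift ord0 j) (padd w (shift R i)))^*.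
Proof. by rewrite !mxE. Qed.

Lemma b0'E w i :
  b0' m0 mt w i 0 = (i == ord0)%:R - (if odd i then 0 else m0 w * mt0c w i).
Proof. by rewrite !mxE; case: (odd i); rewrite ?mulr0; case: i => [[|?] ?]. Qed.

Lemma Mhat0_shift w s :
  Mhat0 mt (padd w (shift R s)) = rowsub (shift_add s) (Mhat0 mt w).
Proof. by apply/matrixP => i j; rewrite [RHS]mxE !Mhat0E periodic2_shift_add. Qed.

Section Forward.
Hypothesis solvable : forall w, inS0 w ->
  exists x : 'cV[R[i]]_6, Mhat0 mt w *m x = b0' m0 mt w.

Lemma solvable_everywhere w : exists x, Mhat0 mt w *m x = b0' m0 mt w.
Proof.
have [w' [w'S0 w'w]] := exists_S0_congruent w.
have [x xP] := solvable w'S0; exists x.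
have m0w : m0 w' = m0 w by rewrite -(padd_shift0 w') -[in RHS](padd_shift0 w) w'w.
have -> : Mhat0 mt w = Mhat0 mt w'.
  by apply/matrixP => i j; rewrite !Mhat0E (w'w _ (mtP _)).
by rewrite xP; apply/colP => i; rewrite !b0'E m0w (w'w _ (mtP _)).
Qed.

Lemma shifted_solution w s : exists x : 'cV_6, forall r, (Mhat0 mt w *m x) r 0 =
  (r == s)%:R - (if odd r == odd s then m0 (padd w (shift R s)) * mt0c w r else 0).
Proof.
have [x xP] := solvable_everywhere (padd w (shift R s)); exists x => r.
have [g _ gK] := injF_bij (@shift_add_inj s); rewrite -(gK r); set i := g r.
move/colP/(_ i): xP; rewrite Mhat0_shift mul_rowsub_mx mxE => ->.
rewrite b0'E periodic2_shift_add // -[X in shift_add _ _ == X](shift_add0 s).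
by rewrite (inj_eq (@shift_add_inj s)) odd_shift_add; case: (odd s); case: (odd i).
Qed.

Lemma class_solution w b j : exists x : 'cV_6,
  rowsub (parity_idx b) (Mhat0 mt w) *m x =
    delta_mx j 0 -
      m0 (padd w (shift R (parity_idx b ord0))) *: \col_k mt0c w (parity_idx b k)
  /\ rowsub (parity_idx (~~ b)) (Mhat0 mt w) *m x = 0.
Proof.
have [x xP] := shifted_solution w (parity_idx b j); exists x.
split; apply/colP => k; rewrite mul_rowsub_mx mxE xP !mxE !odd_parity_idx.
  rewrite (inj_eq (@parity_idx_inj b)) !eqxx andbT.
  by rewrite (@m0_parity_const _ _ (parity_idx b ord0)) // !odd_parity_idx.
have /negbTE-> : parity_idx (~~ b) k != parity_idx b j.
  apply/eqP => /(congr1 (fun i : 'I_8 => odd i)).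
  by rewrite /= !odd_parity_idx; case: (b).
by case: (b); rewrite subr0.
Qed.

Lemma block_conditions_of_solvable w : \rank (Mhat0 mt w) = 6%N ->
  [/\ \rank (Modd mt w) = 3%N, \rank (Meven mt w) = 3%N,
      m0even m0 w *m Meven mt w = 0 & m0odd m0 w *m Modd mt w = 0].
Proof.
rewrite m0evenE m0oddE MevenE ModdE -!scalemxAl => rN.
have rO : (\rank (rowsub odi (Mhat0 mt w)) + 3 <= 6)%N.
  exact: rank_kernel_bound (class_solution w false).
have rE : (\rank (rowsub evi (Mhat0 mt w)) + 3 <= 6)%N.
  exact: rank_kernel_bound (class_solution w true).
have := leq_trans (rank_le_parity_blocks (Mhat0 mt w)) (rank_col_mx_le _ _).
rewrite rN => rEO.
have [rE3 rO3] :
    \rank (rowsub evi (Mhat0 mt w)) = 3%N /\ \rank (rowsub odi (Mhat0 mt w)) = 3%N.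
  by move: rE rO rEO; move: (\rank (rowsub evi _)) (\rank (rowsub odi _)) => ? ?; lia.
have annihilated b : (const_mx 1 : 'rV_4) *m rowsub (parity_idx b) (Mhat0 mt w) = 0.
  apply: const_left_annihilator; last by case: b; rewrite /= ?rE3 ?rO3.
  by move=> j; have [x [xE _]] := class_solution w b j; exists x; exact: xE.
by rewrite (annihilated false) (annihilated true) !scaler0.
Qed.
End Forward.

Lemma rowsub_odi_b0' w : rowsub odi (b0' m0 mt w) = 0.
Proof.
apply/colP => k; rewrite [LHS]mxE b0'E [RHS]mxE (odd_parity_idx true) subr0.
by rewrite -(inj_eq val_inj) /= val_odi addn1.
Qed.

Lemma m0even_b0' w : m0even m0 w *m rowsub evi (b0' m0 mt w) = 0.
Proof.
rewrite m0evenE -scalemxAl; apply/rowP => z; rewrite !mxE (ord1 z).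
under eq_bigr => k _ do
  rewrite [const_mx _ _ _]mxE mul1r [rowsub _ _ _ _]mxE b0'E (odd_parity_idx false) /=.
have evi0 : evi ord0 = ord0 by apply/val_inj; rewrite /= val_evi.
rewrite sumrB -mulr_sumr sum_m0_mt0_everywhere (bigD1 ord0) //= evi0 eqxx.
rewrite big1 ?addr0 ?subrr ?mulr0 //.
move=> k k_neq0; apply/eqP; rewrite pnatr_eq0 eqb0.
apply: contra k_neq0 => /eqP/(congr1 val); rewrite /= val_evi => /eqP.
by rewrite muln_eq0 -(inj_eq val_inj).
Qed.

Lemma solvable_of_block_conditions w : \rank (Mhat0 mt w) = 6%N ->
  \rank (Modd mt w) = 3%N -> \rank (Meven mt w) = 3%N ->
  m0even m0 w *m Meven mt w = 0 -> exists x, Mhat0 mt w *m x = b0' m0 mt w.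
Proof.
rewrite MevenE ModdE => rN rO rE uE.
have rEO : \rank (col_mx (rowsub evi (Mhat0 mt w)) (rowsub odi (Mhat0 mt w))) =
           (\rank (rowsub evi (Mhat0 mt w)) + \rank (rowsub odi (Mhat0 mt w)))%N.
  apply/eqP; rewrite eqn_leq rank_col_mx_le rE rO.
  by apply: leq_trans (rank_le_parity_blocks (Mhat0 mt w)); rewrite rN.
have u_neq0 : m0even m0 w != 0.
  by apply/eqP => /rowP/(_ ord0); rewrite m0evenE !mxE mulr1; apply/eqP/m0_neq0.
have [x xP] := col_mx_solvable rEO rE u_neq0 uE (m0even_b0' w).
exists x; rewrite -[in RHS](rowsub_parity_merge (b0' m0 mt w)) rowsub_odi_b0' -xP.
by rewrite -mul_rowsub_mx rowsub_parity_merge.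
Qed.

End Proposition2.

Theorem proposition2 (R : realType) (m0 : R * R -> R[i])
    (mt : 'I_7 -> R * R -> R[i]) :
  periodic2 m0 -> (forall j, periodic2 (mt j)) ->
  (forall w, inS0 w ->
     \rank (Mhat0 mt w) = 6%N /\
     \sum_(k < 4) m0 w * (mt ord0 (padd w (shift R (evi k))))^* = 1) ->
  ((forall w, inS0 w -> exists x : 'cV[R[i]]_6, Mhat0 mt w *m x = b0' m0 mt w)
   <->
   (forall w, inS0 w ->
      [/\ \rank (Modd mt w) = 3%N, \rank (Meven mt w) = 3%N,
          m0even m0 w *m Meven mt w = 0
        & m0odd m0 w *m Modd mt w = 0])).
Proof.
move=> m0P mtP hyp.
have sum_hyp w : inS0 w ->
    \sum_(k < 4) m0 w * (mt ord0 (padd w (shift R (evi k))))^* = 1.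
  by move=> /hyp[].
split=> [solvable w /hyp[rN _] | conds w wS0].
  exact: block_conditions_of_solvable m0P mtP sum_hyp solvable w rN.
have [rN _] := hyp w wS0; have [rO rE uE _] := conds w wS0.
exact: solvable_of_block_conditions m0P mtP sum_hyp w rN rO rE uE.
Qed.
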